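(* For any $d\ge1$, $K\ge2$ and any $\mathbf W\in\mathrm{OB}(d,K)$, $$\frac{\rho_{\text{one-vs-one}}(\mathbf W)^2}{2}\le\rho_{\text{one-vs-rest}}(\mathbf W)\le\rho_{\text{one-vs-one}}(\mathbf W).$$
   Context: $\mathrm{OB}(d,K)$ is the set of real $d\times K$ matrices with unit-norm columns $\mathbf w_1,\dots,\mathbf w_K$. $\operatorname{dist}(\mathbf v,\mathcal W)=\inf\{\|\mathbf v-\mathbf w\|_2:\mathbf w\in\operatorname{conv}(\mathcal W)\}$; $\rho_{\text{one-vs-rest}}(\mathbf W)=\min_k\operatorname{dist}(\mathbf w_k,\{\mathbf w_j\}_{j\ne k})$; $\rho_{\text{one-vs-one}}(\mathbf W)=\min_k\min_{k'\ne k}\|\mathbf w_k-\mathbf w_{k'}\|_2$. *)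

From mathcomp Require Import all_boot all_order all_algebra.
From mathcomp Require Import classical_sets reals.
Set Implicit Arguments. Unset Strict Implicit. Unset Printing Implicit Defensive.
Import Order.TTheory GRing.Theory Num.Theory.
Local Open Scope ring_scope.
Local Open Scope classical_set_scope.

Definition norm2 {R : realType} {d : nat} (v : 'cV[R]_d) : R :=
  Num.sqrt (\sum_(i < d) v i 0 ^+ 2).

Definition OB {R : realType} {d K : nat} (W : 'M[R]_(d, K)) : Prop :=
  forall k : 'I_K, norm2 (col k W) = 1.

Definition conv_rest {R : realType} {d K : nat} (W : 'M[R]_(d, K)) (k : 'I_K)
  : set 'cV[R]_d :=
  [set u | exists a : 'I_K -> R,
      (forall j, j != k -> 0 <= a j) /\
      \sum_(j < K | j != k) a j = 1 /\
      u = \sum_(j < K | j != k) a j *: col j W].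

Definition dist_rest {R : realType} {d K : nat} (W : 'M[R]_(d, K)) (k : 'I_K) : R :=
  inf [set norm2 (col k W - u) | u in conv_rest W k].

Definition rho_ovr {R : realType} {d K : nat} (W : 'M[R]_(d, K)) : R :=
  inf [set dist_rest W k | k in [set: 'I_K]].

Definition rho_ovo {R : realType} {d K : nat} (W : 'M[R]_(d, K)) : R :=
  inf [set x | exists k k' : 'I_K, k != k' /\ x = norm2 (col k W - col k' W)].

(* For unit vectors, |w_k - w_j|^2 = 2 - 2 <w_k, w_j>, so rho := rho_one-vs-one
   forces <w_k, w_j> <= 1 - rho^2/2 for all j <> k, and by convexity also
   <w_k, u> <= 1 - rho^2/2 for every u in conv{w_j : j <> k}. Cauchy-Schwarz
   against the unit vector w_k then gives
   |w_k - u| >= <w_k - u, w_k> = 1 - <w_k, u> >= rho^2/2.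
   The upper bound is immediate: each w_j (j <> k) lies in that convex hull. *)
From mathcomp Require Import all_boot all_order all_algebra.
From mathcomp Require Import classical_sets reals.
From mathcomp Require Import ring lra.
Import Order.TTheory GRing.Theory Num.Theory.
Local Open Scope ring_scope.

Set Implicit Arguments. Unset Strict Implicit.

Lemma inf_ge0 (R : realType) (E : set R) : lbound E 0 -> 0 <= inf E.
Proof.
move=> E_ge0; have [->|/set0P E_ne] := eqVneq E set0; first by rewrite inf0.
exact: lb_le_inf.
Qed.

Section DotProduct.
Variables (R : realType) (d : nat).
Implicit Types u v w : 'cV[R]_d.

Definition dotv u v : R := \sum_i u i 0 * v i 0.

Lemma dotvC u v : dotv u v = dotv v u.
Proof. by apply: eq_bigr => i _; rewrite mulrC. Qed.

Lemma dotvBr u v w : dotv u (v - w) = dotv u v - dotv u w.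
Proof. by rewrite /dotv -sumrB; apply: eq_bigr => i _; rewrite !mxE mulrBr. Qed.

Lemma dotv_sumr (I : finType) (P : pred I) (a : I -> R) (F : I -> 'cV[R]_d) u :
  dotv u (\sum_(j | P j) a j *: F j) = \sum_(j | P j) a j * dotv u (F j).
Proof.
rewrite /dotv; under eq_bigr => i _ do rewrite summxE mulr_sumr.
rewrite exchange_big /=; apply: eq_bigr => j _; rewrite mulr_sumr.
by apply: eq_bigr => i _; rewrite !mxE mulrCA.
Qed.

Lemma dotv_subZ u v (c : R) :
  dotv (u - c *: v) (u - c *: v) = dotv u u - 2 * c * dotv u v + c ^+ 2 * dotv v v.
Proof.
rewrite /dotv !mulr_sumr -sumrB -big_split /=; apply: eq_bigr => i _.
rewrite !mxE; ring.
Qed.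

Lemma norm2_ge0 v : 0 <= norm2 v.
Proof. exact: sqrtr_ge0. Qed.

Lemma sqr_norm2 v : norm2 v ^+ 2 = dotv v v.
Proof. by rewrite /norm2 sqr_sqrtr // sumr_ge0 // => i _; rewrite sqr_ge0. Qed.

Lemma sqr_norm2_unitB u v : norm2 u = 1 -> norm2 v = 1 ->
  norm2 (u - v) ^+ 2 = 2 - 2 * dotv u v.
Proof.
move=> u1 v1; have := dotv_subZ u v 1.
rewrite scale1r -!sqr_norm2 u1 v1; lra.
Qed.

Lemma dotv_unit_le_norm2 u v : norm2 v = 1 -> dotv u v <= norm2 u.
Proof.
move=> v1; set t := dotv u v.
have : 0 <= norm2 (u - t *: v) ^+ 2 by rewrite sqr_ge0.
rewrite sqr_norm2 dotv_subZ -!sqr_norm2 v1 -/t => t2_le.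
have := norm2_ge0 u; rewrite !expr2 in t2_le *; nra.
Qed.

Lemma dotv_convex_le (I : finType) (P : pred I) (a : I -> R)
    (F : I -> 'cV[R]_d) u (c : R) :
  (forall j, P j -> 0 <= a j) -> \sum_(j | P j) a j = 1 ->
  (forall j, P j -> dotv u (F j) <= c) ->
  dotv u (\sum_(j | P j) a j *: F j) <= c.
Proof.
move=> a_ge0 a_sum1 uF_le; rewrite dotv_sumr.
apply: le_trans (_ : \sum_(j | P j) a j * c <= _).
  by apply: ler_sum => j Pj; rewrite ler_wpM2l ?a_ge0 ?uF_le.
by rewrite -mulr_suml a_sum1 mul1r.
Qed.

Lemma unit_dist_convex_ge (I : finType) (P : pred I) (a : I -> R)
    (F : I -> 'cV[R]_d) w (rho : R) :
  norm2 w = 1 -> (forall j, P j -> norm2 (F j) = 1) ->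
  0 <= rho -> (forall j, P j -> rho <= norm2 (w - F j)) ->
  (forall j, P j -> 0 <= a j) -> \sum_(j | P j) a j = 1 ->
  rho ^+ 2 / 2 <= norm2 (w - \sum_(j | P j) a j *: F j).
Proof.
move=> w1 F1 rho_ge0 rho_le a_ge0 a_sum1.
have wF_le j : P j -> dotv w (F j) <= 1 - rho ^+ 2 / 2.
  move=> Pj; have rho2_le : rho ^+ 2 <= norm2 (w - F j) ^+ 2.
    by rewrite lerXn2r ?nnegrE ?rho_le ?norm2_ge0.
  move: rho2_le; rewrite sqr_norm2_unitB ?F1 //; lra.
have wu_le := @dotv_convex_le I P a F w _ a_ge0 a_sum1 wF_le.
set u := \sum_(j | P j) a j *: F j in wu_le *.
apply: le_trans (dotv_unit_le_norm2 (w - u) w1).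
rewrite dotvC dotvBr -sqr_norm2 w1 expr1n; lra.
Qed.

End DotProduct.

Section OneVsRest.
Variables (R : realType) (d K : nat) (W : 'M[R]_(d, K)).

Lemma exists_neq_ord (k : 'I_K) : (2 <= K)%N -> exists j : 'I_K, j != k.
Proof.
move=> K_ge2; have K_gt0 : (0 < K)%N by apply: leq_trans K_ge2.
have [k_eq0|] := eqVneq (Ordinal K_gt0) k; last by exists (Ordinal K_gt0).
by exists (Ordinal K_ge2); rewrite -k_eq0.
Qed.

Lemma conv_rest_col (k j : 'I_K) : j != k -> conv_rest W k (col j W).
Proof.
move=> jk; exists (fun i => (i == j)%:R); split; first by move=> i _; rewrite ler0n.
split; rewrite (bigD1 j jk) /= eqxx ?scale1r big1 ?addr0 // => i /andP[_ /negbTE ->].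
all: by rewrite ?scale0r.
Qed.

Lemma dist_rest_ge0 (k : 'I_K) : 0 <= dist_rest W k.
Proof. by apply: inf_ge0 => _ [u _ <-]; apply: norm2_ge0. Qed.

Lemma dist_rest_le (k j : 'I_K) :
  j != k -> dist_rest W k <= norm2 (col k W - col j W).
Proof.
move=> jk; apply: ge_inf; last by exists (col j W) => //; apply: conv_rest_col.
by exists 0 => _ [u _ <-]; apply: norm2_ge0.
Qed.

Lemma rho_ovo_ge0 : 0 <= rho_ovo W.
Proof. by apply: inf_ge0 => _ [k [k' [_ ->]]]; apply: norm2_ge0. Qed.

Lemma rho_ovo_le (k k' : 'I_K) :
  k != k' -> rho_ovo W <= norm2 (col k W - col k' W).
Proof.
move=> kk'; apply: ge_inf; last by exists k, k'.
by exists 0 => _ [? [? [_ ->]]]; apply: norm2_ge0.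
Qed.

Lemma rho_ovr_le_dist_rest (k : 'I_K) : rho_ovr W <= dist_rest W k.
Proof.
apply: ge_inf; last by exists k.
by exists 0 => _ [j _ <-]; apply: dist_rest_ge0.
Qed.

Lemma rho_ovo_sqr_half_le_dist_rest (k : 'I_K) : (2 <= K)%N -> OB W ->
  rho_ovo W ^+ 2 / 2 <= dist_rest W k.
Proof.
move=> K_ge2 W_OB; apply: lb_le_inf.
  have [j jk] := exists_neq_ord k K_ge2.
  by exists (norm2 (col k W - col j W)), (col j W) => //; apply: conv_rest_col.
move=> _ [u [a [a_ge0 [a_sum1 ->]]] <-].
apply: unit_dist_convex_ge => //; first exact: rho_ovo_ge0.
by move=> j jk; rewrite rho_ovo_le // eq_sym.
Qed.

End OneVsRest.

Theorem mainTheorem15 (R : realType) (d K : nat) (W : 'M[R]_(d, K)) :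
  (1 <= d)%N -> (2 <= K)%N -> OB W ->
  rho_ovo W ^+ 2 / 2 <= rho_ovr W /\ rho_ovr W <= rho_ovo W.
Proof.
move=> _ K_ge2 W_OB; have K_gt0 : (0 < K)%N by apply: leq_trans K_ge2.
have [j jk0] := exists_neq_ord (Ordinal K_gt0) K_ge2.
split; apply: lb_le_inf.
- by exists (dist_rest W (Ordinal K_gt0)), (Ordinal K_gt0).
- by move=> _ [k _ <-]; apply: rho_ovo_sqr_half_le_dist_rest.
- by exists (norm2 (col j W - col (Ordinal K_gt0) W)), j, (Ordinal K_gt0).
move=> _ [k [k' [kk' ->]]].
by apply: le_trans (rho_ovr_le_dist_rest W k) (dist_rest_le _ _); rewrite eq_sym.
Qed.
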